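(* Let $G$ be a multi-player game with arena $(\Pi,V,(V_i)_{i\in\Pi},E)$, payoff functions $f_i:Plays\to P_i$ and strict total orders $\prec_i$ on $P_i$. Assume that for every $i\in\Pi$: (a) for all plays $h\rho,h\rho'$ with $h$ a history, $f_i(\rho)\preceq_i f_i(\rho')$ implies $f_i(h\rho)\preceq_i f_i(h\rho')$; and (b) the two-player zero-sum game $G_i$ has uniform optimal strategies for both players. Then for every $v_0\in V$ there exists a finite-memory Nash equilibrium in $(G,v_0)$.
   Context: An arena is $(\Pi,V,(V_i)_{i\in\Pi},E)$ with $\Pi$ a finite set of players, $V$ a finite set of vertices, $E\subseteq V\times V$ such that every vertex has an outgoing edge, and $(V_i)_{i\in\Pi}$ a partition of $V$ ($V_i$ controlled by player $i$). Plays are infinite paths, histories nonempty finite paths; $Plays(v_0)$, $Hist_i(v_0)$ denote plays from $v_0$ and histories from $v_0$ ending in $V_i$. Each player $i$ has a payoff function $f_i:Plays\to P_i$ and a strict total order $\prec_i$ on $P_i$; $p\preceq_i p'$ means $p\prec_i p'$ or $p=p'$. A strategy of player $i$ from $v_0$ maps each $hv\in Hist_i(v_0)$ to a successor of $v$. It is positional if it depends only on the last vertex, uniform if it is a positional strategy given by a map $v\mapsto\sigma(v)$ on all of $V_i$ (hence usable from every initial vertex), and finite-memory if it can be computed by a finite-state machine reading the history (finitely many memory states, a memory update on each vertex, and the next vertex determined by the current memory state and current vertex). A profile is finite-memory if all its strategies are. The outcome $\langle(\sigma_i)_{i\in\Pi}\rangle_{v_0}$ is the unique play from $v_0$ consistent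 with all strategies. A profile is a Nash equilibrium in $(G,v_0)$ if no player $i$ has a strategy $\sigma'_i$ with $f_i(\langle(\sigma_j)_j\rangle_{v_0})\prec_i f_i(\langle\sigma'_i,\sigma_{-i}\rangle_{v_0})$. The game $G_i$ is the two-player zero-sum game on the same arena where player $i$ (controlling $V_i$, using $f_i$ and $\prec_i$) plays against player $-i$, the coalition of the others (controlling $V\setminus V_i$). Optimal strategies from $v$: a strategy $\tau$ of player $i$ and $\tau'$ of player $-i$ and an element ${val}_i(v)$ such that ${val}_i(v)\preceq_i f_i(\rho)$ for all plays from $v$ consistent with $\tau$ and $f_i(\rho)\preceq_i{val}_i(v)$ for all plays from $v$ consistent with $\tau'$. ''$G_i$ has uniform optimal strategies for both players'' means there are uniform strategies of player $i$ and of player $-i$ that are optimal from every initial vertex $v\in V$. *)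

From mathcomp Require Import all_boot.
Unset Printing Implicit Defensive.

Section Games.
Variables (Pi V : finType) (own : V -> Pi) (E : rel V).

Definition is_play (rho : nat -> V) : Prop := forall n, E (rho n) (rho n.+1).

Definition catp (h : seq V) (rho : nat -> V) : nat -> V :=
  fun n => if n < size h then nth (rho 0) h n else rho (n - size h).

(* Histories from v0 are represented as v0 :: t with path E v0 t;
   their last vertex is last v0 t. *)
Definition is_strategy (i : Pi) (v0 : V) (sigma : seq V -> V) : Prop :=
  forall t, path E v0 t -> own (last v0 t) = i ->
    E (last v0 t) (sigma (v0 :: t)).

Definition finite_memory (i : Pi) (v0 : V) (sigma : seq V -> V) : Prop :=
  exists (M : finType) (m0 : M) (upd : M -> V -> M) (nxt : M -> V -> V),
    forall t, path E v0 t -> own (last v0 t) = i ->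
      sigma (v0 :: t) = nxt (foldl upd m0 (v0 :: t)) (last v0 t).

Definition profile := Pi -> seq V -> V.

(* Tail (after v0) of the history of length n.+1 generated by a profile. *)
Fixpoint out_tail (prof : profile) (v0 : V) (n : nat) : seq V :=
  match n with
  | 0 => [::]
  | n'.+1 => let t := out_tail prof v0 n' in
             rcons t (prof (own (last v0 t)) (v0 :: t))
  end.

Definition outcome (prof : profile) (v0 : V) : nat -> V :=
  fun n => last v0 (out_tail prof v0 n).

Definition deviate (prof : profile) (i : Pi) (sigma' : seq V -> V) : profile :=
  fun j => if j == i then sigma' else prof j.

Variables (P : Pi -> Type) (lt : forall i, P i -> P i -> Prop).

Definition le (i : Pi) (x y : P i) : Prop := lt i x y \/ x = y.

Definition strict_total_order (T : Type) (r : T -> T -> Prop) : Prop :=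
  (forall x, ~ r x x) /\ (forall x y z, r x y -> r y z -> r x z) /\
  (forall x y, x <> y -> r x y \/ r y x).

Variable (f : forall i, (nat -> V) -> P i).

Definition nash_equilibrium (prof : profile) (v0 : V) : Prop :=
  (forall i, is_strategy i v0 (prof i)) /\
  forall i sigma', is_strategy i v0 sigma' ->
    ~ lt i (f i (outcome prof v0)) (f i (outcome (deviate prof i sigma') v0)).

Definition prefix_monotone (i : Pi) : Prop :=
  forall (h : seq V) (rho rho' : nat -> V), h <> [::] ->
    is_play (catp h rho) -> is_play (catp h rho') ->
    le i (f i rho) (f i rho') -> le i (f i (catp h rho)) (f i (catp h rho')).

(* Uniform (positional, all of V_i) strategies in G_i and consistency. *)
Definition uniform_strategy_i (i : Pi) (s : V -> V) : Prop :=
  forall v, own v = i -> E v (s v).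
Definition uniform_strategy_coal (i : Pi) (s : V -> V) : Prop :=
  forall v, own v <> i -> E v (s v).
Definition consistent_i (i : Pi) (s : V -> V) (rho : nat -> V) : Prop :=
  forall n, own (rho n) = i -> rho n.+1 = s (rho n).
Definition consistent_coal (i : Pi) (s : V -> V) (rho : nat -> V) : Prop :=
  forall n, own (rho n) <> i -> rho n.+1 = s (rho n).

Definition uniform_optimal (i : Pi) : Prop :=
  exists (s s' : V -> V), uniform_strategy_i i s /\ uniform_strategy_coal i s' /\
    forall v, exists val : P i,
      (forall rho, is_play rho -> rho 0 = v -> consistent_i i s rho -> le i val (f i rho)) /\
      (forall rho, is_play rho -> rho 0 = v -> consistent_coal i s' rho -> le i (f i rho) val).

End Games.

(* Everybody plays the optimal strategy (from (b)) of the owner of the current vertex;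
   the first player i to leave this play is punished forever by all the others with the
   optimal coalition strategy of G_i. If i deviates at a vertex u of the prescribed play,
   she gets at most the value of G_i at u, while by optimality the prescribed play from u
   yields at least that value; prefix monotonicity (a) transfers this comparison of
   suffixes to the whole plays. *)

From mathcomp Require Import all_boot.
From Stdlib Require Import IndefiniteDescription FunctionalExtensionality Classical_Prop.

Section Games.
Variables (Pi V : finType) (own : V -> Pi) (E : rel V).
Variables (P : Pi -> Type) (lt : forall i, P i -> P i -> Prop).
Variable (f : forall i, (nat -> V) -> P i).

(* Set only after [lt] is declared, which would otherwise get its index implicit. *)
Set Implicit Arguments.
Unset Strict Implicit.

Local Notation le := (le Pi P lt).
Local Notation is_play := (is_play V E).
Local Notation catp := (catp V).
Local Notation outcome := (outcome Pi V own).
Local Notation out_tail := (out_tail Pi V own).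
Local Notation is_strategy := (is_strategy Pi V own E).

Lemma le_trans i (x y z : P i) :
  strict_total_order (P i) (lt i) -> le i x y -> le i y z -> le i x z.
Proof.
move=> [_ [lt_trans _]] [xy|->] [yz|<-]; by [left; exact: lt_trans xy yz|left|left|right].
Qed.

Lemma le_not_gt i (x y : P i) :
  strict_total_order (P i) (lt i) -> le i x y -> ~ lt i y x.
Proof.
move=> [lt_irr [lt_trans _]] [xy|->] yx; last exact: lt_irr yx.
by apply: (lt_irr x); exact: lt_trans xy yx.
Qed.

Definition suffix (rho : nat -> V) (m : nat) : nat -> V := fun k => rho (m + k).

Lemma suffix0 rho : suffix rho 0 = rho.
Proof. by apply: functional_extensionality => k; rewrite /suffix add0n. Qed.

Lemma is_play_suffix rho m : is_play rho -> is_play (suffix rho m).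
Proof. by move=> play k; rewrite /suffix addnS; exact: play. Qed.

Lemma catp_mkseq_suffix (rho pi : nat -> V) m :
  (forall k, k < m -> pi k = rho k) -> catp (mkseq rho m) (suffix pi m) = pi.
Proof.
move=> agree; apply: functional_extensionality => k.
rewrite /catp /suffix size_mkseq.
by case: ltnP => km; [rewrite nth_mkseq ?agree | rewrite subnKC].
Qed.

Lemma outcomeS prof v0 n :
  outcome prof v0 n.+1 = prof (own (outcome prof v0 n)) (v0 :: out_tail prof v0 n).
Proof. by rewrite /outcome /= last_rcons. Qed.

Lemma out_tail_path prof v0 :
  (forall j, is_strategy j v0 (prof j)) -> forall n, path E v0 (out_tail prof v0 n).
Proof.
move=> strat; elim=> [//|n IH] /=.
by rewrite rcons_path IH; exact: strat.
Qed.

Lemma outcome_is_play prof v0 :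
  (forall j, is_strategy j v0 (prof j)) -> is_play (outcome prof v0).
Proof.
move=> strat n; have := out_tail_path strat n.+1.
by rewrite /= rcons_path /outcome /= last_rcons => /andP[].
Qed.

Definition optimal_pair (i : Pi) (s s' : V -> V) : Prop :=
  uniform_strategy_i Pi V own E i s /\ uniform_strategy_coal Pi V own E i s' /\
  forall v, exists val : P i,
    (forall rho, is_play rho -> rho 0 = v -> consistent_i Pi V own i s rho -> le i val (f i rho)) /\
    (forall rho, is_play rho -> rho 0 = v -> consistent_coal Pi V own i s' rho -> le i (f i rho) val).

Lemma optimal_pairs_choice :
  (forall i, uniform_optimal Pi V own E P lt f i) ->
  exists s s' : Pi -> V -> V, forall i, optimal_pair i (s i) (s' i).
Proof.
move=> opt.
have /functional_choice [ss' opt_ss'] :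
    forall i, exists p : (V -> V) * (V -> V), optimal_pair i p.1 p.2.
  by move=> i; have [s [s' opt_i]] := opt i; exists (s, s').
by exists (fun i => (ss' i).1), (fun i => (ss' i).2).
Qed.

Section OptimalPair.
Variables (i : Pi) (s s' : V -> V).
Hypotheses (lt_order : strict_total_order (P i) (lt i))
  (monotone : prefix_monotone Pi V E P lt f i) (opt : optimal_pair i s s').

Lemma optimal_pair_suffix_le rho pi m :
  is_play rho -> is_play pi -> (forall k, k <= m -> pi k = rho k) ->
  consistent_i Pi V own i s (suffix rho m) ->
  consistent_coal Pi V own i s' (suffix pi m) ->
  le i (f i pi) (f i rho).
Proof.
move=> play_rho play_pi agree cons_rho cons_pi.
have [_ [_ /(_ (pi m)) [val [val_le le_val]]]] := opt.
have suffix_le : le i (f i (suffix pi m)) (f i (suffix rho m)).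
  apply: le_trans lt_order (le_val _ _ _ cons_pi) (val_le _ _ _ cons_rho).
  - exact: is_play_suffix.
  - by rewrite /suffix addn0.
  - exact: is_play_suffix.
  - by rewrite /suffix addn0 agree.
clear val_le le_val cons_rho cons_pi.
case: m agree suffix_le => [_|m agree]; first by rewrite !suffix0.
have pi_eq := catp_mkseq_suffix (m := m.+1) (fun k km => agree k (ltnW km)).
have rho_eq := catp_mkseq_suffix (rho := rho) (pi := rho) (m := m.+1) (fun _ _ => erefl).
have := monotone (h := mkseq rho m.+1) (rho := suffix pi m.+1) (rho' := suffix rho m.+1).
by rewrite pi_eq rho_eq; apply.
Qed.

End OptimalPair.

Section Punishment.
Variables (s s' : Pi -> V -> V) (v0 : V).

Definition follow (u : V) : V := s (own u) u.

Definition follow_play (n : nat) : V := iter n follow v0.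

Local Notation memory := (option V * option Pi)%type.

(* The memory holds the last vertex read and the deviator: the owner of the first
   vertex whose successor is not the prescribed [follow] move. *)
Definition mem0 : memory := (None, None).

Definition mem_upd (m : memory) (v : V) : memory :=
  (Some v, if m.2 is Some k then Some k
           else if m.1 is Some u then (if v == follow u then None else Some (own u))
           else None).

Definition mem_move (j : Pi) (m : memory) (v : V) : V :=
  if m.2 is Some k then (if k == j then s j v else s' k v) else s j v.

Definition punish_profile : profile Pi V :=
  fun j h => mem_move j (foldl mem_upd mem0 h) (last v0 h).

Definition mem_at (Q : profile Pi V) (n : nat) : memory :=
  foldl mem_upd mem0 (v0 :: out_tail Q v0 n).

Lemma punish_profile_finite_memory j : finite_memory Pi V own E j v0 (punish_profile j).
Proof. by exists memory, mem0, mem_upd, (mem_move j). Qed.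

Lemma mem_atS Q n : mem_at Q n.+1 = mem_upd (mem_at Q n) (outcome Q v0 n.+1).
Proof. by rewrite /mem_at /outcome /= last_rcons -cats1 foldl_cat. Qed.

Lemma mem_at_vertex Q n : (mem_at Q n).1 = Some (outcome Q v0 n).
Proof. by case: n => [|n] //; rewrite mem_atS. Qed.

Lemma deviator_stable Q k n m :
  n <= m -> (mem_at Q n).2 = Some k -> (mem_at Q m).2 = Some k.
Proof.
move=> /subnK <- dev; elim: (m - n) => [//|d IH].
by rewrite addSn mem_atS /= IH.
Qed.

Lemma mem_at_none_follow Q n :
  (mem_at Q n.+1).2 = None -> outcome Q v0 n.+1 = follow (outcome Q v0 n).
Proof.
rewrite mem_atS /= mem_at_vertex.
by case: (mem_at Q n).2 => [//|]; case: eqP.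
Qed.

Lemma outcome_mem_move Q n (j := own (outcome Q v0 n)) :
  Q j = punish_profile j -> outcome Q v0 n.+1 = mem_move j (mem_at Q n) (outcome Q v0 n).
Proof. by move=> Qj; rewrite outcomeS Qj. Qed.

Lemma punish_profile_no_deviator n : (mem_at punish_profile n).2 = None.
Proof.
elim: n => [//|n IH]; rewrite mem_atS /= IH mem_at_vertex.
by rewrite (outcome_mem_move erefl) /mem_move IH eqxx.
Qed.

Lemma outcome_punish_profile : outcome punish_profile v0 = follow_play.
Proof.
apply: functional_extensionality; elim=> [//|n IH].
by rewrite mem_at_none_follow ?punish_profile_no_deviator // IH.
Qed.

Lemma outcome_agree_follow Q n :
  (mem_at Q n).2 = None -> forall l, l <= n -> outcome Q v0 l = follow_play l.
Proof.
move=> none; elim=> [//|l IH] ln.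
rewrite mem_at_none_follow ?IH 1?ltnW //.
by case dev: (mem_at Q l.+1).2 => [k|] //; rewrite (deviator_stable ln dev) in none.
Qed.

Section Deviation.
Variables (i : Pi) (sigma : seq V -> V).
Local Notation Q := (deviate Pi V punish_profile i sigma).
Local Notation pi := (outcome Q v0).

Lemma deviate_other j : j != i -> Q j = punish_profile j.
Proof. by rewrite /deviate => /negbTE->. Qed.

Lemma first_deviation m :
  (mem_at Q m).2 = None -> (mem_at Q m.+1).2 != None ->
  own (pi m) = i /\ (mem_at Q m.+1).2 = Some i.
Proof.
move=> none.
rewrite mem_atS /= none mem_at_vertex; case: (pi m.+1 =P follow (pi m)) => // off_follow _.
suff own_i : own (pi m) = i by rewrite own_i.
apply/eqP/negPn/negP => own_ne; apply: off_follow.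
by rewrite outcome_mem_move ?deviate_other // /mem_move none.
Qed.

Lemma punished_after_deviation m l :
  (mem_at Q m.+1).2 = Some i -> m < l -> own (pi l) <> i -> pi l.+1 = s' i (pi l).
Proof.
move=> dev ml own_l.
rewrite outcome_mem_move ?deviate_other //; last exact/eqP.
by rewrite /mem_move (deviator_stable ml dev); case: eqP => // /esym.
Qed.

Lemma deviation_cases :
  pi = follow_play \/
  exists m, [/\ forall l, l <= m -> pi l = follow_play l, own (pi m) = i &
                forall l, m < l -> own (pi l) <> i -> pi l.+1 = s' i (pi l)].
Proof.
have [[n dev]|never] := classic (exists n, (mem_at Q n).2 != None); last first.
  left; apply: functional_extensionality => n; apply: (outcome_agree_follow (n := n)) => //.
  by case dev: (mem_at Q n).2 => [k|] //; case: never; exists n; rewrite dev.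
right; case: (ex_minnP (ex_intro (fun n => (mem_at Q n).2 != None) n dev)).
case=> [//|m] dev_m min_m.
have none_m : (mem_at Q m).2 = None.
  by case dev': (mem_at Q m).2 => [k|] //; move: (min_m m); rewrite dev' ltnn => /(_ isT).
have [own_m dev_i] := first_deviation none_m dev_m.
exists m; split=> // l; [exact: outcome_agree_follow | exact: punished_after_deviation].
Qed.

End Deviation.

Hypotheses (s_move : forall i, uniform_strategy_i Pi V own E i (s i))
  (s'_move : forall i, uniform_strategy_coal Pi V own E i (s' i)).

Lemma follow_play_is_play : is_play follow_play.
Proof. by move=> n; exact: s_move. Qed.

Lemma punish_profile_strategy j : is_strategy j v0 (punish_profile j).
Proof.
move=> t _ own_j; rewrite /punish_profile /mem_move /=.
case: (foldl mem_upd mem0 (v0 :: t)).2 => [k|]; last exact: s_move.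
case: eqP => [_|/eqP k_j]; first exact: s_move.
by apply: s'_move; rewrite own_j; apply/eqP; rewrite eq_sym.
Qed.

Lemma punish_profile_deviation_le i sigma :
  strict_total_order (P i) (lt i) -> prefix_monotone Pi V E P lt f i ->
  optimal_pair i (s i) (s' i) -> is_strategy i v0 sigma ->
  le i (f i (outcome (deviate Pi V punish_profile i sigma) v0))
       (f i (outcome punish_profile v0)).
Proof.
move=> lt_order monotone opt sigma_strat; rewrite outcome_punish_profile.
have [->|[m [agree own_m punished]]] := deviation_cases i sigma; first by right.
apply: (optimal_pair_suffix_le lt_order monotone opt _ _ agree).
- exact: follow_play_is_play.
- apply: outcome_is_play => j; rewrite /deviate.
  by case: eqP => [->|_] //; exact: punish_profile_strategy.
- by move=> k own_k; rewrite /suffix addnS /= /follow own_k.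
- case=> [|k]; rewrite /suffix ?addn0 // !addnS => own_k.
  by apply: punished; rewrite // ltnS leq_addr.
Qed.

End Punishment.

End Games.

Theorem corollary1 (Pi V : finType) (own : V -> Pi) (E : rel V)
  (HE : forall v, exists w, E v w)
  (P : Pi -> Type) (lt : forall i, P i -> P i -> Prop)
  (Hlt : forall i, strict_total_order (P i) (lt i))
  (f : forall i, (nat -> V) -> P i)
  (Ha : forall i, prefix_monotone Pi V E P lt f i)
  (Hb : forall i, uniform_optimal Pi V own E P lt f i) :
  forall v0 : V, exists prof : profile Pi V,
    (forall i, finite_memory Pi V own E i v0 (prof i)) /\
    nash_equilibrium Pi V own E P lt f prof v0.
Proof.
move=> v0.
have [s [s' opt]] := optimal_pairs_choice Hb.
have s_move i := (opt i).1; have s'_move i := (opt i).2.1.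
exists (punish_profile own s s' v0); split=> [i|].
  exact: punish_profile_finite_memory.
split=> [i|i sigma sigma_strat]; first exact: (punish_profile_strategy s_move s'_move).
apply: le_not_gt (Hlt i) _.
exact: (punish_profile_deviation_le s_move s'_move (Hlt i) (Ha i) (opt i) sigma_strat).
Qed.
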